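(* Let $F|R$ be an extension of ordered fields with canonical valuation $v$, and let $\tilde\iota:\mathcal C(R)\to\mathcal C(F)$ be any map constructed as follows: for a non-ball cut $C=(D,E)$ of $R$, $\tilde\iota(C)$ is one of $D^{+}_F$ or $E^{-}_F$; if $C$ is the lower edge $B_0^-$ (resp. upper edge $B_0^+$) in $R$ of a ball $B_0\neq R$ with ball complement $(D,E)$ in $R$, then $\tilde\iota(C)=D^{+}_F$ (resp. $E^{-}_F$); and $\tilde\iota((\emptyset,R))=R^{-}_F$, $\tilde\iota((R,\emptyset))=R^{+}_F$. If $vR$ is cofinal in $vF$, then $\tilde\iota$ sends principal cuts of $R$ to principal cuts of $F$. Otherwise, no principal cut of $R$ is sent to a principal cut of $F$.
   Context: The canonical valuation $v$ of an ordered field has as valuation ring the convex hull of $\mathbb Z$; $vR\subseteq vF$ are the value groups. For a totally ordered set $T$, a cut is a pair $(D,E)$ with $D<E$ and $D\cup E=T$; $\mathcal C(T)$ is the set of cuts. A cut is principal if $D$ has a last element or $E$ has a first element. For nonempty $A\subseteq T$, $A^+=(D,T\setminus D)$ with $D$ the smallest initial segment containing $A$, and $A^-=(T\setminus E,E)$ with $E$ the smallest final segment containing $A$; for $A\subseteq R$, $A^{\pm}_F$ denote these cuts taken in $F$. For an ordered field $K$, $a\in K$ and a final segment $S$ of $vK$ (possibly empty), $B_S(a,K)=\{b\in K\mid v(a-b)\in S\cup\{\infty\}\}$ is a ball. A ball complement of a ball $B$ is a pair $(D,E)$ with $D<B<E$ and $D\cup B\cup E=K$. A cut is a ball cut if it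 equals $B^+$ (upper edge) or $B^-$ (lower edge) of some ball $B$, otherwise it is a non-ball cut. *)

From HB Require Import structures.
From mathcomp Require Import all_boot all_order all_algebra.
From mathcomp Require Import boolp classical_sets.
Set Implicit Arguments. Unset Strict Implicit. Unset Printing Implicit Defensive.
Import Order.TTheory GRing.Theory Num.Theory.
Local Open Scope ring_scope.
Local Open Scope classical_set_scope.

(* A cut (D,E) is represented by its lower part D, an initial segment; E = ~` D. *)
Definition is_cut (K : realFieldType) (D : set K) : Prop :=
  forall x y : K, D y -> x <= y -> D x.

Definition principal_cut (K : realFieldType) (D : set K) : Prop :=
  (exists m, D m /\ forall x, D x -> x <= m) \/
  (exists m, ~ D m /\ forall x, ~ D x -> m <= x).

(* lower part of A^+ : the smallest initial segment containing A *)
Definition cut_up (K : realFieldType) (A : set K) : set K :=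
  [set x | exists2 a, A a & x <= a].

(* lower part of A^- : complement of the smallest final segment containing A *)
Definition cut_down (K : realFieldType) (A : set K) : set K :=
  ~` [set x | exists2 a, A a & a <= x].

Definition val_ring (K : realFieldType) : set K :=
  [set x | exists n : nat, `|x| <= n%:R].

(* vle x y  <->  v x <= v y  (i.e. y/x in the valuation ring; v 0 = oo) *)
Definition vle (K : realFieldType) (x y : K) : Prop :=
  exists n : nat, `|y| <= n%:R * `|x|.

(* A final segment S of vK, represented by the set of nonzero elements whose
   value lies in S (a set of nonzero elements closed upward under vle). *)
Definition vfinal (K : realFieldType) (S : set K) : Prop :=
  forall x y : K, x != 0 -> y != 0 -> S x -> vle x y -> S y.

(* B_S(a,K) = {b | v(a-b) in S \cup {oo}} *)
Definition ball (K : realFieldType) (S : set K) (a : K) : set K :=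
  [set b | b = a \/ (a - b != 0 /\ S (a - b))].

Definition is_ball (K : realFieldType) (B : set K) : Prop :=
  exists S a, vfinal S /\ B = ball S a.

Definition ball_complement (K : realFieldType) (B D E : set K) : Prop :=
  (forall d b, D d -> B b -> d < b) /\
  (forall b e, B b -> E e -> b < e) /\
  (forall d e, D d -> E e -> d < e) /\
  (forall x, D x \/ B x \/ E x).

Definition ball_cut (K : realFieldType) (C : set K) : Prop :=
  exists B, is_ball B /\ (C = cut_up B \/ C = cut_down B).

Definition val_cofinal (R F : realFieldType) (i : R -> F) : Prop :=
  forall y : F, y != 0 -> exists x : R, x != 0 /\ vle y (i x).

From HB Require Import structures.
From mathcomp Require Import all_boot all_order all_algebra.
From mathcomp Require Import boolp classical_sets.
From mathcomp Require Import lra.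
Import Order.TTheory GRing.Theory Num.Theory.
Local Open Scope ring_scope.
Local Open Scope classical_set_scope.

(* A principal cut of R is an edge of a singleton ball {m}, so the map sends
   it to the cut of F just below i(m, oo) or just above i(-oo, m). Since these
   images are closed under taking midpoints with i m, the resulting cut of F
   can only be principal with i m itself as endpoint, and this happens exactly
   when i(m, oo) comes arbitrarily close to i m, i.e. when every positive
   element of F dominates some i r with r > 0 in R: this is the cofinality of
   vR in vF. *)

Section PrincipalCuts.
Context {K : realFieldType}.
Implicit Types (C S : set K) (c m : K).

Lemma is_cut_le m : is_cut [set x | x <= m].
Proof. by move=> x y /= ym /le_trans; apply. Qed.

Lemma is_cut_lt m : is_cut [set x | x < m].
Proof. by move=> x y /= ym /le_lt_trans; apply. Qed.

Lemma principal_cutE C : is_cut C -> principal_cut C ->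
  exists m, C = [set x | x <= m] \/ C = [set x | x < m].
Proof.
move=> cutC [[m [Cm maxm]] | [m [Cm minm]]]; exists m.
- left; apply/seteqP; split=> x /=; first exact: maxm.
  by move=> xm; apply: cutC Cm xm.
- right; apply/seteqP; split=> x /=.
    by move=> Cx; rewrite ltNge; apply/negP => /(cutC _ _ Cx).
  by move=> xm; apply: contrapT => /minm; rewrite leNgt xm.
Qed.

Lemma is_ball_set1 m : is_ball [set m].
Proof.
exists set0, m; split; first by move=> ? ? _ _ [].
by apply/seteqP; split=> x /=; [left | case=> // -[]].
Qed.

Lemma set1_neqT m : [set m] <> setT.
Proof.
move=> m_full; have /= : [set m] (m + 1) by rewrite m_full.
lra.
Qed.

Lemma ball_complement_set1 m :
  ball_complement [set m] [set x | x < m] [set x | m < x].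
Proof.
split; first by move=> d b /= ? ->.
split; first by move=> b e /= -> ?.
split; first by move=> d e /=; lra.
by move=> x /=; case: (ltgtP x m); auto.
Qed.

Lemma cut_up_set1 m : cut_up [set m] = [set x | x <= m].
Proof. by apply/seteqP; split=> x /=; [case=> a -> | exists m]. Qed.

Lemma cut_down_set1 m : cut_down [set m] = [set x | x < m].
Proof.
apply/seteqP; split=> x /=; last by move=> xm [a ->]; rewrite leNgt xm.
by move=> xm; rewrite ltNge; apply/negP => mx; apply: xm; exists m.
Qed.

Lemma principal_cut_downP c S :
  (forall s, S s -> c < s) -> (forall s, S s -> S ((c + s) / 2)) ->
  principal_cut (cut_down S) <-> (forall y, c < y -> exists2 s, S s & s <= y).
Proof.
move=> S_gt S_mid; split=> [[[w [Dw maxw]] | [w [Dw minw]]] | S_coinit].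
- have wc : w <= c.
    rewrite leNgt; apply/negP => cw.
    suff : 2 * w - c <= w by lra.
    apply: maxw => -[s Ss le_s]; apply: Dw; exists ((c + s) / 2); first exact: S_mid.
    lra.
  move=> y cy; apply: contrapT => /maxw; lra.
- move/contrapT: Dw => [s Ss sw].
  have : w <= (c + s) / 2 by apply: minw => /=; apply; exists ((c + s) / 2); auto.
  by have := S_gt s Ss; lra.
- left; exists c; split; first by case=> s /S_gt; lra.
  move=> y Dy; rewrite leNgt; apply/negP => /S_coinit [s Ss sy].
  by apply: Dy; exists s.
Qed.

Lemma principal_cut_upP c S :
  (forall s, S s -> s < c) -> (forall s, S s -> S ((s + c) / 2)) ->
  principal_cut (cut_up S) <-> (forall y, y < c -> exists2 s, S s & y <= s).
Proof.
move=> S_lt S_mid; split=> [[[w [[s Ss ws] maxw]] | [w [Uw minw]]] | S_cofin].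
- have : (s + c) / 2 <= w by apply: maxw; exists ((s + c) / 2); auto.
  by have := S_lt s Ss; lra.
- have cw : c <= w.
    rewrite leNgt; apply/negP => wc.
    suff : w <= 2 * w - c by lra.
    apply: minw => -[s Ss le_s]; apply: Uw; exists ((s + c) / 2); first exact: S_mid.
    lra.
  move=> y yc; apply: contrapT => /minw; lra.
- right; exists c; split; first by case=> s /S_lt; lra.
  move=> y Uy; rewrite leNgt; apply/negP => /S_cofin [s Ss ys].
  by apply: Uy; exists s.
Qed.

End PrincipalCuts.

Section ValuationCofinality.
Variables (R F : realFieldType) (i : {rmorphism R -> F}).
Hypothesis i_mono : {mono i : x y / x <= y}.

Let i_lt : {mono i : x y / x < y}. Proof. exact: leW_mono. Qed.

Lemma mono_rmorph_norm : {morph i : x / `|x|}.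
Proof.
move=> x; have [x0 | x0] := lerP 0 x.
  by rewrite !ger0_norm // -(rmorph0 i) i_mono.
by rewrite !ltr0_norm ?rmorphN // -(rmorph0 i) i_lt.
Qed.

Lemma mono_rmorph_midpoint a b : i ((a + b) / 2) = (i a + i b) / 2.
Proof. by rewrite fmorph_div rmorphD rmorph_nat. Qed.

Lemma val_cofinalP :
  val_cofinal i <-> forall z : F, 0 < z -> exists2 r : R, 0 < r & i r <= z.
Proof.
split=> [cof z z0 | small y y0].
  have [x [x0 [n le_n]]] := cof z (lt0r_neq0 z0).
  exists (`|x| / n.+1%:R); first by rewrite divr_gt0 ?normr_gt0.
  rewrite fmorph_div rmorph_nat ler_pdivrMr ?ltr0Sn // mono_rmorph_norm.
  rewrite (gtr0_norm z0) in le_n; apply: (le_trans le_n).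
  by rewrite mulrC ler_pM2l // -natr1 lerDl.
have [r r0 le_r] := small `|y| ltac:(by rewrite normr_gt0).
exists r; split; first exact: lt0r_neq0.
by exists 1%N; rewrite mul1r ger0_norm // -(rmorph0 i) i_mono ltW.
Qed.

Lemma principal_cut_down_image m :
  principal_cut (cut_down (i @` [set x | m < x])) <-> val_cofinal i.
Proof.
apply: iff_trans (principal_cut_downP (i m) _ _ _) _.
- by move=> _ [x /= mx <-]; rewrite i_lt.
- move=> _ [x /= mx <-]; exists ((m + x) / 2); last exact: mono_rmorph_midpoint.
  by rewrite /=; lra.
apply: iff_trans (iff_sym val_cofinalP); split=> [coinit z z0 | small y my].
  have [_ [x /= mx <-]] := coinit (i m + z) ltac:(lra).
  by exists (x - m); [lra | rewrite rmorphB; lra].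
have [r r0 le_r] := small (y - i m) ltac:(lra).
by exists (i (m + r)); [exists (m + r) => /=; lra | rewrite rmorphD; lra].
Qed.

Lemma principal_cut_up_image m :
  principal_cut (cut_up (i @` [set x | x < m])) <-> val_cofinal i.
Proof.
apply: iff_trans (principal_cut_upP (i m) _ _ _) _.
- by move=> _ [x /= xm <-]; rewrite i_lt.
- move=> _ [x /= xm <-]; exists ((x + m) / 2); last exact: mono_rmorph_midpoint.
  by rewrite /=; lra.
apply: iff_trans (iff_sym val_cofinalP); split=> [cofin z z0 | small y ym].
  have [_ [x /= xm <-]] := cofin (i m - z) ltac:(lra).
  by exists (m - x); [lra | rewrite rmorphB; lra].
have [r r0 le_r] := small (i m - y) ltac:(lra).
by exists (i (m - r)); [exists (m - r) => /=; lra | rewrite rmorphB; lra].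
Qed.

End ValuationCofinality.

Theorem proposition4p6 (R F : realFieldType) (i : {rmorphism R -> F})
  (i_mono : {mono i : x y / x <= y})
  (iota : set R -> set F)
  (H_nonball : forall C : set R, is_cut C -> ~ ball_cut C ->
      iota C = cut_up (i @` C) \/ iota C = cut_down (i @` (~` C)))
  (H_ball : forall (C : set R) (B0 D E : set R),
      is_cut C -> is_ball B0 -> B0 <> setT -> ball_complement B0 D E ->
      (C = cut_down B0 -> iota C = cut_up (i @` D)) /\
      (C = cut_up B0 -> iota C = cut_down (i @` E)))
  (H_empty : iota set0 = cut_down (i @` setT))
  (H_full : iota setT = cut_up (i @` setT)) :
  (val_cofinal i ->
     forall C : set R, is_cut C -> principal_cut C -> principal_cut (iota C)) /\
  (~ val_cofinal i ->
     forall C : set R, is_cut C -> principal_cut C -> ~ principal_cut (iota C)).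
Proof.
have iota_le m : iota [set x | x <= m] = cut_down (i @` [set x | m < x]).
  apply: (H_ball _ _ _ _ (is_cut_le m) (is_ball_set1 m) (set1_neqT m)
    (ball_complement_set1 m)).2.
  by rewrite cut_up_set1.
have iota_lt m : iota [set x | x < m] = cut_up (i @` [set x | x < m]).
  apply: (H_ball _ _ _ _ (is_cut_lt m) (is_ball_set1 m) (set1_neqT m)
    (ball_complement_set1 m)).1.
  by rewrite cut_down_set1.
split=> [cof | ncof] C cutC /(principal_cutE _ cutC) [m [->|->]];
  rewrite ?iota_le ?iota_lt ?principal_cut_down_image ?principal_cut_up_image //.
Qed.
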